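(* Let $X$ be a Polish space with a complete metric and a countable basis $\mathcal O$, and let $I$ be a $\sigma$-ideal on $X$. Then the ideal $J_I$ is weakly selective: for every $J_I$-positive set $a\subseteq\mathcal O$ and every function $f:a\to\omega$, there is a $J_I$-positive $b\subseteq a$ such that $f\restriction b$ is constant or injective.
   Context: For $a\subseteq\mathcal O$, $\mathrm{cl}(a)=\{x\in X:\forall\varepsilon>0\ \exists O\in a\ O\subseteq B_\varepsilon(x)\}$, where $B_\varepsilon(x)$ is the open ball of radius $\varepsilon$ around $x$. $J_I=\{a\subseteq\mathcal O:\mathrm{cl}(a)\in I\}$; $a$ is $J_I$-positive if $a\notin J_I$. *)

From Stdlib Require Import Reals Classical.
Open Scope R_scope.

Definition set (X : Type) := X -> Prop.

Section Defs.
Variable X : Type.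
Variable d : X -> X -> R.

Definition is_metric : Prop :=
  (forall x y, 0 <= d x y) /\
  (forall x y, d x y = 0 <-> x = y) /\
  (forall x y, d x y = d y x) /\
  (forall x y z, d x z <= d x y + d y z).

Definition cauchy (u : nat -> X) : Prop :=
  forall eps, 0 < eps -> exists N, forall m n, (N <= m)%nat -> (N <= n)%nat -> d (u m) (u n) < eps.

Definition converges_to (u : nat -> X) (l : X) : Prop :=
  forall eps, 0 < eps -> exists N, forall n, (N <= n)%nat -> d (u n) l < eps.

Definition complete_metric : Prop :=
  forall u, cauchy u -> exists l, converges_to u l.

Definition ball (x : X) (eps : R) : set X := fun y => d x y < eps.

Definition is_open (U : set X) : Prop :=
  forall x, U x -> exists eps, 0 < eps /\ forall y, ball x eps y -> U y.

Definition countable_family (O : set (set X)) : Prop :=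
  exists e : nat -> set X, forall S, O S -> exists n, e n = S.

Definition countable_basis (O : set (set X)) : Prop :=
  countable_family O /\
  (forall S, O S -> is_open S) /\
  (forall U x, is_open U -> U x -> exists S, O S /\ S x /\ forall y, S y -> U y).

Definition sigma_ideal (I : set (set X)) : Prop :=
  I (fun _ => False) /\
  (forall A B : set X, I B -> (forall x, A x -> B x) -> I A) /\
  (forall A : nat -> set X, (forall n, I (A n)) -> I (fun x => exists n, A n x)).

Definition cl (a : set (set X)) : set X :=
  fun x => forall eps, 0 < eps -> exists S, a S /\ forall y, S y -> ball x eps y.

Definition J_I (I : set (set X)) (a : set (set X)) : Prop := I (cl a).

(* weak selectivity of J_I on the family O: functions f : a -> omega are
   represented by total functions on sets, only their restriction to a matters *)
Definition weakly_selective (O : set (set X)) (J : set (set (set X))) : Prop :=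
  forall a : set (set X), (forall S, a S -> O S) -> ~ J a ->
  forall f : set X -> nat,
    exists b : set (set X), (forall S, b S -> a S) /\ ~ J b /\
      ((exists n, forall S, b S -> f S = n) \/
       (forall S T, b S -> b T -> f S = f T -> S = T)).
End Defs.

(* If some fibre of f is J_I-positive it is the required b.  Otherwise every
   fibre has its closure in I, and b is chosen greedily along an enumeration
   (U_i) of the basis: the i-th member of b lies in U_i and takes a value of f
   not taken before, so f is injective on b.  A point of cl(a) outside the
   closures of all fibres sees, near it, only sets with values outside any
   given finite list, hence lies in cl(b); so cl(a) is covered by cl(b) and
   countably many sets of I, and b is positive. *)
From Stdlib Require Import Reals Classical.
From Stdlib Require Import ClassicalEpsilon List Lra Lia.
Open Scope R_scope.

Section GreedySelection.
Variable X : Type.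
Variables (a : set (set X)) (f : set X -> nat) (U : nat -> set X).

Definition fresh_in (i : nat) (L : list nat) (S : set X) : Prop :=
  a S /\ (forall y, S y -> U i y) /\ ~ In (f S) L.

Definition pick_fresh (i : nat) (L : list nat) : set X :=
  epsilon (inhabits (fun _ => False)) (fresh_in i L).

Fixpoint used_values (i : nat) : list nat :=
  match i with
  | O => nil
  | S i => f (pick_fresh i (used_values i)) :: used_values i
  end.

Definition greedy_pick (i : nat) : set X := pick_fresh i (used_values i).

Definition greedy_family (S : set X) : Prop :=
  exists i, fresh_in i (used_values i) (greedy_pick i) /\ S = greedy_pick i.

Lemma greedy_family_sub S : greedy_family S -> a S.
Proof. intros [i [[HS _] ->]]. exact HS. Qed.

Lemma used_values_lt i j : (i < j)%nat -> In (f (greedy_pick i)) (used_values j).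
Proof.
  induction j as [|j IH]; intros Hij; [lia|].
  simpl. destruct (Nat.eq_dec i j) as [->|Hne]; [now left|].
  right. apply IH. lia.
Qed.

Lemma greedy_family_injective S T :
  greedy_family S -> greedy_family T -> f S = f T -> S = T.
Proof.
  intros [i [[_ [_ Hi]] ->]] [j [[_ [_ Hj]] ->]] Hf.
  destruct (Nat.lt_trichotomy i j) as [Hlt|[->|Hlt]]; [|reflexivity|].
  - exfalso. apply Hj. rewrite <- Hf. now apply used_values_lt.
  - exfalso. apply Hi. rewrite Hf. now apply used_values_lt.
Qed.

Lemma greedy_pick_spec i :
  (exists S, fresh_in i (used_values i) S) ->
  greedy_family (greedy_pick i) /\ forall y, greedy_pick i y -> U i y.
Proof.
  intros Hex.
  assert (Hfresh : fresh_in i (used_values i) (greedy_pick i))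
    by exact (epsilon_spec _ _ Hex).
  split; [now exists i | apply Hfresh].
Qed.

End GreedySelection.

Section MetricClosure.
Variable X : Type.
Variable d : X -> X -> R.
Hypothesis Hd : is_metric X d.

Lemma ball_center x eps : 0 < eps -> ball X d x eps x.
Proof.
  destruct Hd as [_ [Hzero _]]. unfold ball.
  now rewrite (proj2 (Hzero x x) eq_refl).
Qed.

Lemma ball_open x eps : is_open X d (ball X d x eps).
Proof.
  destruct Hd as [_ [_ [_ Htri]]].
  intros y Hy. unfold ball in *. exists (eps - d x y). split; [lra|].
  intros z Hz. unfold ball in Hz. specialize (Htri x y z). lra.
Qed.

Lemma ball_le x r r' y : r <= r' -> ball X d x r y -> ball X d x r' y.
Proof. unfold ball. lra. Qed.

Definition local_base_enum (U : nat -> set X) : Prop :=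
  forall x eps, 0 < eps ->
    exists i, U i x /\ is_open X d (U i) /\ forall y, U i y -> ball X d x eps y.

Lemma countable_basis_local_base_enum O :
  countable_basis X d O -> exists U, local_base_enum U.
Proof.
  intros [[U HU] [Hopen Hbase]]. exists U. intros x eps Heps.
  destruct (Hbase _ x (ball_open x eps) (ball_center x eps Heps))
    as [S [HOS [HxS HSball]]].
  destruct (HU S HOS) as [i <-].
  exists i. auto.
Qed.

Variables (a : set (set X)) (f : set X -> nat).

Definition fibre (n : nat) (S : set X) : Prop := a S /\ f S = n.

Lemma cl_avoid_values x :
  (forall n, ~ cl X d (fibre n) x) ->
  forall L : list nat, exists delta, 0 < delta /\
    forall S, a S -> (forall y, S y -> ball X d x delta y) -> ~ In (f S) L.
Proof.
  intros Hfib L. induction L as [|n L IH].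
  { exists 1. split; [lra|]. intros S _ _ []. }
  destruct IH as [dL [HdL HL]].
  destruct (not_all_ex_not _ _ (Hfib n)) as [dn Hdn].
  apply imply_to_and in Hdn as [Hdn Hnot].
  exists (Rmin dL dn). split; [now apply Rmin_glb_lt|].
  intros S HS Hsmall [Heq|Hin].
  - apply Hnot. exists S. split; [now split|].
    intros y Hy. exact (ball_le _ _ _ _ (Rmin_r dL dn) (Hsmall y Hy)).
  - apply (HL S HS); auto.
    intros y Hy. exact (ball_le _ _ _ _ (Rmin_l dL dn) (Hsmall y Hy)).
Qed.

Lemma cl_greedy_family U x :
  local_base_enum U -> cl X d a x -> (forall n, ~ cl X d (fibre n) x) ->
  cl X d (greedy_family X a f U) x.
Proof.
  intros HU Hx Hfib eps Heps.
  destruct (HU x eps Heps) as [i [HxU [HUopen HUball]]].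
  destruct (HUopen x HxU) as [r [Hr HrU]].
  destruct (cl_avoid_values x Hfib (used_values X a f U i)) as [delta [Hdelta Havoid]].
  destruct (Hx (Rmin r delta) (Rmin_glb_lt _ _ _ Hr Hdelta)) as [S [HaS HSball]].
  destruct (greedy_pick_spec X a f U i) as [Hgreedy HsubU].
  { exists S. split; [exact HaS|]. split.
    - intros y Hy. apply HrU. exact (ball_le _ _ _ _ (Rmin_l r delta) (HSball y Hy)).
    - apply Havoid; [exact HaS|].
      intros y Hy. exact (ball_le _ _ _ _ (Rmin_r r delta) (HSball y Hy)). }
  exists (greedy_pick X a f U i). split; [exact Hgreedy|].
  intros y Hy. apply HUball, HsubU, Hy.
Qed.

End MetricClosure.

Lemma sigma_ideal_cover X (I : set (set X)) (A C : set X) (B : nat -> set X) :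
  sigma_ideal X I -> I A -> (forall n, I (B n)) ->
  (forall x, C x -> A x \/ exists n, B n x) -> I C.
Proof.
  intros [_ [Imono Iunion]] HA HB Hcover.
  set (D := fun k => match k with O => A | S k => B k end).
  apply (Imono _ (fun x => exists k, D k x)).
  - apply Iunion. intros [|k]; [exact HA | apply HB].
  - intros x Hx. destruct (Hcover x Hx) as [HAx|[n HBx]].
    + now exists O.
    + now exists (S n).
Qed.

Theorem proposition4p2 (X : Type) (d : X -> X -> R) (O : set (set X)) (I : set (set X)) :
  is_metric X d -> complete_metric X d -> countable_basis X d O ->
  sigma_ideal X I ->
  weakly_selective X O (J_I X d I).
Proof.
  intros Hd _ HO HI a _ Ha f.
  destruct (classic (exists n, ~ J_I X d I (fibre X a f n))) as [[n Hn]|Hnone].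
  { exists (fibre X a f n). split; [now intros S []|]. split; [exact Hn|].
    left. exists n. now intros S []. }
  assert (Hfibres : forall n, I (cl X d (fibre X a f n))).
  { intros n. apply NNPP. intros Hn. apply Hnone. now exists n. }
  destruct (countable_basis_local_base_enum X d Hd O HO) as [U HU].
  exists (greedy_family X a f U).
  split; [apply greedy_family_sub|].
  split; [|right; apply greedy_family_injective].
  intros Hb. apply Ha.
  apply (sigma_ideal_cover X I _ _ _ HI Hb Hfibres).
  intros x Hx.
  destruct (classic (exists n, cl X d (fibre X a f n) x)) as [Hin|Hout]; [now right|].
  left. apply (cl_greedy_family X d a f U x HU Hx).
  intros n Hn. apply Hout. now exists n.
Qed.
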